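(* Let $w=w_1\cdots w_N$ be a 132-avoiding sorting network of $\mathfrak S_n$ and $k\in[N-1]$, and let $u=(Q^{\to}_w)^{-1}(k)$ be the cell of $Q^\to_w$ containing $k$. Then $(w_k,w_{k+1})=(j,j+1)$ for some $j$ if and only if $(Q^\to_w,u)$ is a horizontal adjacency; and $(w_k,w_{k+1})=(j+1,j)$ for some $j$ if and only if $(Q^\to_w,u)$ is a vertical adjacency.
   Context: $N=\binom n2$; sorting networks, intermediate permutations and 132-avoidance as usual ($\sigma_k$ is $\sigma_{k-1}$ with entries in positions $w_k,w_k+1$ swapped; 132-avoiding means all $\sigma_k$ avoid 132). For a 132-avoiding sorting network $w$, $Q_w$ is the filling in which, for each $j\in[n-1]$, column $j$ contains from top to bottom the indices $m$ with $w_m=j$ in increasing order; it is a standard Young tableau of staircase shape $(n-1,\dots,1)$. $Q^\to_w$ is obtained by shifting row $i$ of $Q_w$ to the right by $i-1$ (cell $(i,j)\mapsto(i,i+j-1)$); it is a shifted standard Young tableau of shape $\{(i,j):1\le i\le j\le n-1\}$. For a (shifted) standard tableau $T$ with cell set $D$ and $u=(i,j)\in D$: $(T,u)$ is a horizontal adjacency if $(i,j+1)\in D$ and $T(i,j+1)=T(u)+1$; a vertical adjacency if $(i+1,j)\in D$ and $T(i+1,j)=T(u)+1$. *)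

(* All indices are 1-based as in the paper. *)
From mathcomp Require Import all_boot.
Set Implicit Arguments. Unset Strict Implicit. Unset Printing Implicit Defensive.

Definition letter (w : seq nat) (m : nat) : nat := nth 0 w m.-1.

Definition swap_adj (s : seq nat) (p : nat) : seq nat :=
  let a := nth 0 s p.-1 in let b := nth 0 s p in
  set_nth 0 (set_nth 0 s p.-1 b) p a.

Definition sigma (n : nat) (w : seq nat) (k : nat) : seq nat :=
  foldl swap_adj (iota 1 n) (take k w).

Definition sorting_network (n : nat) (w : seq nat) : Prop :=
  [/\ size w = 'C(n, 2),
      all (fun x => (1 <= x) && (x <= n.-1)) w
    & sigma n w 'C(n, 2) = rev (iota 1 n)].

Definition avoids132 (s : seq nat) : Prop :=
  forall a b c, a < b -> b < c -> c < size s ->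
    ~ (nth 0 s a < nth 0 s c /\ nth 0 s c < nth 0 s b).

Definition avoiding132_network (n : nat) (w : seq nat) : Prop :=
  forall k, k <= 'C(n, 2) -> avoids132 (sigma n w k).

(* Q_w(i,j): the i-th smallest index m with w_m = j *)
Definition Qw (w : seq nat) (i j : nat) : nat :=
  nth 0 [seq m <- iota 1 (size w) | letter w m == j] i.-1.

Definition Qshift (w : seq nat) (i c : nat) : nat := Qw w i (c - i).+1.

Definition inD (n i c : nat) : bool := [&& 1 <= i, i <= c & c <= n.-1].

(* the cell of Q_w containing k: column w_k, row = #{m <= k : w_m = w_k};
   the cell of Q^->_w containing k is its shift *)
Definition cellQ (w : seq nat) (k : nat) : nat * nat :=
  (count (fun m => letter w m == letter w k) (iota 1 k), letter w k).
Definition cellQshift (w : seq nat) (k : nat) : nat * nat :=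
  let: (i, j) := cellQ w k in (i, i + j - 1).

Definition hadj (n : nat) (w : seq nat) (u : nat * nat) : bool :=
  let: (i, c) := u in
  [&& inD n i c, inD n i c.+1 & Qshift w i c.+1 == (Qshift w i c).+1].

Definition vadj (n : nat) (w : seq nat) (u : nat * nat) : bool :=
  let: (i, c) := u in
  [&& inD n i c, inD n i.+1 c & Qshift w i.+1 c == (Qshift w i c).+1].

From mathcomp Require Import all_boot zify.
Set Implicit Arguments. Unset Strict Implicit. Unset Printing Implicit Defensive.

(* Follow each sigma_k through its inversion table, which records for every
   position the number of larger entries to its left.  The table sums to the
   number of inversions, which changes by one per step; as a sorting network
   reaches N inversions in N steps, every step swaps an ascent a < b.  When
   sigma_k and sigma_(k+1) both avoid 132, every entry left of a exceeds a, so
   the step only replaces the table value w_(k+1) - 1 (at the position of a)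
   by w_(k+1), a value that did not occur before.  By induction the positive
   table values are distinct, and for j > 0 the number of letters j among
   w_1 .. w_k equals the number of table entries >= j.  Hence if w_(k+1) = j+1
   then k+1 is the occurrence of j+1 of the same rank as the occurrence of j at
   k (a horizontal adjacency), and if w_(k+1) = j-1 its rank is one larger
   (a vertical adjacency). *)

Fixpoint inv_code_from (pre s : seq nat) : seq nat :=
  if s is z :: s' then count (fun u => z < u) pre :: inv_code_from (z :: pre) s'
  else [::].

Definition inv_code (s : seq nat) : seq nat := inv_code_from [::] s.

Lemma inv_code_from_perm pre pre' s :
  perm_eq pre pre' -> inv_code_from pre s = inv_code_from pre' s.
Proof.
elim: s pre pre' => [|z s IHs] pre pre' eq_pre //=.
by rewrite (permP eq_pre) (IHs _ (z :: pre')) // perm_cons.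
Qed.

Lemma inv_code_from_swap2 a b pre s :
  inv_code_from (b :: a :: pre) s = inv_code_from (a :: b :: pre) s.
Proof. by apply: inv_code_from_perm; apply/permP => P /=; lia. Qed.

Lemma inv_code_from_cat pre s t :
  inv_code_from pre (s ++ t) = inv_code_from pre s ++ inv_code_from (catrev s pre) t.
Proof. by elim: s pre => [|z s IHs] pre //=; rewrite IHs. Qed.

Lemma inv_code_from_iota pre m k :
  all (fun u => u < m) pre -> inv_code_from pre (iota m k) = nseq k 0.
Proof.
elim: k m pre => [|k IHk] m pre pre_lt //=.
have -> : count (fun u => m < u) pre = 0.
  by apply/eqP; rewrite -leqn0 leqNgt -has_count; apply/hasPn => u /(allP pre_lt) /=; lia.
by rewrite IHk //= ltnSn; apply: sub_all pre_lt => u /= /ltnW.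
Qed.

Lemma inv_code_from_rev_iota pre m :
  all (fun u => m < u) pre -> inv_code_from pre (rev (iota 1 m)) = iota (size pre) m.
Proof.
elim: m pre => [|m IHm] pre pre_gt //.
rewrite -[m.+1]addn1 iotaD addnC rev_cat addn1 /=.
have -> : count (fun u => m.+1 < u) pre = size pre by apply/eqP; rewrite -all_count.
by rewrite IHm //= ltnSn; apply: sub_all pre_gt => u /= /ltnW.
Qed.

Lemma inv_code_from_bound pre s v :
  v \in inv_code_from pre s -> v < size pre + size s.
Proof.
elim: s pre => [|z s IHs] pre //=; rewrite inE => /orP [/eqP -> | /IHs].
  by have := count_size (fun u => z < u) pre; lia.
by rewrite /= addSn addnS.
Qed.

Lemma inv_code_fromP pre s v : v \in inv_code_from pre s ->
  exists s1 c s2, s = s1 ++ c :: s2 /\ v = count (fun u => c < u) (catrev s1 pre).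
Proof.
elim: s pre => [|z s IHs] pre //=; rewrite inE => /orP [/eqP -> | /IHs].
  by exists [::], z, s.
by move=> [s1 [c [s2 [-> ->]]]]; exists (z :: s1), c, s2.
Qed.

Lemma count_ge_inv_code_from pre s m :
  count (fun v => m <= v) (inv_code_from pre s) <= size s - (m - size pre).
Proof.
elim: s pre => [|z s IHs] pre //=.
have := IHs (z :: pre); have := count_size (fun u => z < u) pre; rewrite /=.
by case: leqP; lia.
Qed.

Lemma count_ge_inv_code s m : count (fun v => m <= v) (inv_code s) <= size s - m.
Proof. by have := count_ge_inv_code_from [::] s m; rewrite subn0. Qed.

Lemma inv_code_adj x a b y :
  inv_code (x ++ a :: b :: y) =
  inv_code x ++ count (fun u => a < u) x ::
    (b < a) + count (fun u => b < u) x :: inv_code_from (a :: b :: rev x) y.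
Proof.
by rewrite /inv_code inv_code_from_cat /= catrevE cats0 !count_rev inv_code_from_swap2.
Qed.

Lemma sumn_inv_code_swap x a b y :
  sumn (inv_code (x ++ b :: a :: y)) + (b < a) =
  sumn (inv_code (x ++ a :: b :: y)) + (a < b).
Proof.
by rewrite !inv_code_adj !sumn_cat /= inv_code_from_swap2; lia.
Qed.

Lemma inv_code_swap_perm x a b y : all (fun u => a < u) x -> a < b ->
  perm_eq (size x :: inv_code (x ++ b :: a :: y))
          ((size x).+1 :: inv_code (x ++ a :: b :: y)).
Proof.
move=> x_gt a_lt_b.
have cnt_a : count (fun u => a < u) x = size x by apply/eqP; rewrite -all_count.
rewrite !inv_code_adj cnt_a a_lt_b ltnNge (ltnW a_lt_b) add1n add0n inv_code_from_swap2.
by apply/permP => P; rewrite /= !count_cat /=; lia.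
Qed.

Lemma not_avoids132 x1 x2 x3 x4 u v z : u < z -> z < v ->
  ~ avoids132 (x1 ++ u :: x2 ++ v :: x3 ++ z :: x4).
Proof.
move=> u_lt_z z_lt_v avoid.
have nth_at s1 s2 c : nth 0 (s1 ++ c :: s2) (size s1) = c.
  by rewrite nth_cat ltnn subnn.
have nth_shift s1 s2 i : nth 0 (s1 ++ s2) (size s1 + i) = nth 0 s2 i.
  by rewrite nth_cat ltnNge leq_addr /= addKn.
apply: (avoid (size x1) (size x1 + (size x2).+1)
              (size x1 + (size x2).+1 + (size x3).+1)).
- by lia.
- by lia.
- by rewrite size_cat /= size_cat /= size_cat /=; lia.
by rewrite -addnA !nth_shift addSn /= nth_shift /= !nth_at.
Qed.

Lemma avoids132_swap_prefix_gt x a b y : uniq (x ++ a :: b :: y) -> a < b ->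
  avoids132 (x ++ b :: a :: y) -> all (fun u => a < u) x.
Proof.
move=> uniq_s a_lt_b avoid; apply/allP => u u_in_x.
rewrite ltn_neqAle; apply/andP; split.
  apply: contraTneq u_in_x => <-.
  by move: uniq_s; rewrite cat_uniq => /and3P [_ /hasPn /(_ a)]; rewrite inE eqxx => /(_ isT).
rewrite leqNgt; apply/negP => u_lt_a.
case/splitPr: u_in_x avoid => x1 x2; rewrite -catA /= => avoid.
exact: (not_avoids132 (x3 := [::]) u_lt_a a_lt_b avoid).
Qed.

Lemma inv_code_notin_succ x a b y : uniq (x ++ a :: b :: y) -> a < b ->
  all (fun u => a < u) x -> avoids132 (x ++ a :: b :: y) ->
  (size x).+1 \notin inv_code (x ++ a :: b :: y).
Proof.
move=> uniq_s a_lt_b x_gt avoid.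
have cnt_le c : count (fun u => c < u) x <= size x by apply: count_size.
rewrite inv_code_adj mem_cat !inE !negb_or; apply/and4P; split.
- by apply/negP => /inv_code_from_bound /=; lia.
- by apply/eqP; have := cnt_le a; lia.
- by apply/eqP; rewrite ltnNge (ltnW a_lt_b); have := cnt_le b; lia.
apply/negP => /inv_code_fromP [y1 [c [y2 [def_y]]]].
rewrite catrevE !count_cat /= !count_rev.
have c_neq_a : c != a.
  move: uniq_s; rewrite def_y cat_uniq => /and3P [_ _] /= /andP [].
  move=> a_notin _; apply: contraNneq a_notin => <-.
  by rewrite !(inE, mem_cat) eqxx !orbT.
case: (ltngtP c a) => [c_lt_a | a_lt_c |]; last by move/eqP: c_neq_a.
  have -> : count (fun u => c < u) x = size x.
    by apply/eqP; rewrite -all_count; apply: sub_all x_gt => u /=; lia.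
  by rewrite (ltn_trans c_lt_a a_lt_b) /=; lia.
have c_nlt_b : ~~ (c < b).
  apply/negP => c_lt_b.
  by move: avoid; rewrite def_y; apply: (not_avoids132 (x2 := [::])).
have -> : count (fun u => c < u) y1 = 0.
  apply/eqP; rewrite -leqn0 leqNgt -has_count; apply/hasP => [[u u_in_y1 c_lt_u]].
  case/splitPr: u_in_y1 def_y avoid => y11 y12 -> avoid.
  by move: avoid; rewrite -catA; apply: (not_avoids132 (x2 := b :: y11)).
by rewrite (negbTE c_nlt_b) /= !add0n => /eqP; rewrite eqn_leq ltnNge cnt_le.
Qed.

Lemma unit_steps_tight (f : nat -> nat) N : f 0 = 0 -> f N = N ->
  (forall k, k < N -> f k.+1 <= (f k).+1) -> forall k, k < N -> f k.+1 = (f k).+1.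
Proof.
move=> f0 fN f_step.
have f_incr k d : k + d <= N -> f (k + d) <= f k + d.
  elim: d => [|d IHd] le_kd; first by rewrite !addn0.
  rewrite addnS in le_kd *.
  by have := f_step (k + d) le_kd; have := IHd (ltnW le_kd); lia.
move=> k lt_kN; have := f_incr 0 k; have := f_incr k.+1 (N - k.+1).
by rewrite subnKC // add0n f0 fN; have := f_step k lt_kN; lia.
Qed.

Lemma swap_adj_cat x a b y :
  swap_adj (x ++ a :: b :: y) (size x).+1 = x ++ b :: a :: y.
Proof. by elim: x => [|z x IHx] //; move: IHx; rewrite /swap_adj /= => ->. Qed.

Lemma swap_adjP s p : 0 < p < size s ->
  exists x a b y, [/\ s = x ++ a :: b :: y, swap_adj s p = x ++ b :: a :: y
                    & (size x).+1 = p].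
Proof.
case/andP=> p_gt0 p_lt; have := size_drop p.-1 s.
case def_s: (drop p.-1 s) => [|a [|b y]] /=; try lia.
set x := take p.-1 s; move=> _.
have def_p : p = (size x).+1 by rewrite size_take; case: ifP; lia.
have -> : s = x ++ a :: b :: y by rewrite -def_s cat_take_drop.
by exists x, a, b, y; rewrite def_p swap_adj_cat.
Qed.

Definition letter_count (w : seq nat) (j k : nat) : nat :=
  count (fun m => letter w m == j) (iota 1 k).

Lemma letter_countS w j k :
  letter_count w j k.+1 = letter_count w j k + (letter w k.+1 == j).
Proof. by rewrite /letter_count -[k.+1]addn1 iotaD count_cat /= addn0 add1n addn1. Qed.

Lemma count_leq_split j s :
  count (fun v => j <= v) s = count (fun v => j < v) s + count (pred1 j) s.
Proof. by elim: s => //= v s ->; case: (ltngtP j v) => /=; lia. Qed.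

Lemma Qw_letter_count w k : 0 < k <= size w ->
  Qw w (letter_count w (letter w k) k) (letter w k) = k.
Proof.
case: k => // k /= lt_kw; rewrite /Qw letter_countS eqxx addn1 /=.
have -> : iota 1 (size w) = iota 1 k ++ k.+1 :: iota k.+2 (size w - k.+1).
  rewrite {1}(_ : size w = k + (1 + (size w - k.+1))); last by lia.
  by rewrite !iotaD /= add1n addn1.
by rewrite filter_cat /letter_count -size_filter nth_cat ltnn subnn /= eqxx.
Qed.

Lemma letter_Qw w i j : 0 < Qw w i j -> letter w (Qw w i j) = j.
Proof.
rewrite /Qw; set s := filter _ _.
case: (ltnP i.-1 (size s)) => [lt_i | le_i]; last by rewrite nth_default.
by move=> _; have := mem_nth 0 lt_i; rewrite mem_filter => /andP [/eqP].
Qed.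

Lemma sigmaS n w k : k < size w ->
  sigma n w k.+1 = swap_adj (sigma n w k) (letter w k.+1).
Proof. by move=> lt_kw; rewrite /sigma (take_nth 0) // foldl_rcons. Qed.

Section SortingNetwork.

Variables (n : nat) (w : seq nat).
Hypothesis w_sorting : sorting_network n w.

Lemma letter_network_range k : k < size w -> 0 < letter w k.+1 < n.
Proof.
case: w_sorting => _ /allP letters_in _ lt_kw.
by have /letters_in /andP := mem_nth 0 lt_kw; rewrite /letter /=; lia.
Qed.

Lemma perm_sigma k : k <= size w -> perm_eq (sigma n w k) (iota 1 n).
Proof.
elim: k => [|k IHk] le_kw; first by rewrite /sigma take0.
have size_sigma : size (sigma n w k) = n by rewrite (perm_size (IHk (ltnW le_kw))) size_iota.
have /swap_adjP [x [a [b [y [def_s swap_s _]]]]] : 0 < letter w k.+1 < size (sigma n w k).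
  by rewrite size_sigma; apply: letter_network_range.
rewrite sigmaS // swap_s; apply: perm_trans (IHk (ltnW le_kw)).
rewrite def_s perm_cat2l.
by apply/permP => P /=; lia.
Qed.

Lemma sigma_step k : k < size w -> exists x a b y,
  [/\ sigma n w k = x ++ a :: b :: y, sigma n w k.+1 = x ++ b :: a :: y
    & (size x).+1 = letter w k.+1].
Proof.
move=> lt_kw; rewrite sigmaS //.
apply: swap_adjP; rewrite (perm_size (perm_sigma (ltnW lt_kw))) size_iota.
exact: letter_network_range.
Qed.

Lemma sumn_inv_code_sigmaS k : k < size w ->
  sumn (inv_code (sigma n w k.+1)) = (sumn (inv_code (sigma n w k))).+1.
Proof.
apply: (unit_steps_tight (f := fun i => sumn (inv_code (sigma n w i)))) => {k}.
- by rewrite /sigma take0 /inv_code inv_code_from_iota // sumn_nseq.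
- case: w_sorting => -> _ ->.
  by rewrite /inv_code inv_code_from_rev_iota // sumnE -bin2_sum /index_iota subn0.
move=> k /sigma_step [x [a [b [y [-> -> _]]]]].
by have := sumn_inv_code_swap x a b y; lia.
Qed.

Lemma sigma_step_ascent k x a b y : k < size w ->
  sigma n w k = x ++ a :: b :: y -> sigma n w k.+1 = x ++ b :: a :: y -> a < b.
Proof.
move=> lt_kw def_s def_s'.
have := sumn_inv_code_swap x a b y; rewrite -def_s -def_s' sumn_inv_code_sigmaS //.
by case: (a < b); case: (b < a); lia.
Qed.

Hypothesis w_avoiding : avoiding132_network n w.

Lemma inv_code_sigma_step k : k < size w ->
  perm_eq ((letter w k.+1).-1 :: inv_code (sigma n w k.+1))
          (letter w k.+1 :: inv_code (sigma n w k))
  /\ letter w k.+1 \notin inv_code (sigma n w k).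
Proof.
move=> lt_kw; have [x [a [b [y [def_s def_s' def_p]]]]] := sigma_step lt_kw.
have a_lt_b := sigma_step_ascent lt_kw def_s def_s'.
have size_w : size w = 'C(n, 2) by case: w_sorting.
have uniq_s : uniq (x ++ a :: b :: y).
  by rewrite -def_s (perm_uniq (perm_sigma (ltnW lt_kw))) iota_uniq.
have avoid_s : avoids132 (x ++ a :: b :: y) by rewrite -def_s; apply: w_avoiding; lia.
have avoid_s' : avoids132 (x ++ b :: a :: y) by rewrite -def_s'; apply: w_avoiding; lia.
have x_gt := avoids132_swap_prefix_gt uniq_s a_lt_b avoid_s'.
rewrite def_s def_s' -def_p /=; split; first exact: inv_code_swap_perm.
exact: inv_code_notin_succ.
Qed.

Lemma count_inv_code_sigma_le1 k m : k <= size w -> 0 < m ->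
  count (pred1 m) (inv_code (sigma n w k)) <= 1.
Proof.
move=> + m_gt0; elim: k => [|k IHk] le_kw.
  by rewrite /sigma take0 /inv_code inv_code_from_iota // count_nseq /= eq_sym gtn_eqF.
have [perm_s notin_s] := inv_code_sigma_step le_kw.
have := permP perm_s (pred1 m); rewrite /=.
have [def_m | ne_m] := eqVneq (letter w k.+1) m.
  by move/count_memPn: notin_s; rewrite def_m ltn_eqF ?ltn_predL //=; lia.
by have := IHk (ltnW le_kw); rewrite /=; lia.
Qed.

Lemma letter_count_inv_code k j : k <= size w -> 0 < j ->
  letter_count w j k = count (fun v => j <= v) (inv_code (sigma n w k)).
Proof.
move=> + j_gt0; elim: k => [|k IHk] le_kw.
  by rewrite /sigma take0 /inv_code inv_code_from_iota // count_nseq /= leqn0 gtn_eqF.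
have [perm_s _] := inv_code_sigma_step le_kw.
have := letter_network_range le_kw; have := permP perm_s (fun v => j <= v).
rewrite letter_countS IHk ?(ltnW le_kw) //=.
by case: (leqP j (letter w k.+1).-1); case: (leqP j (letter w k.+1)); case: eqVneq; lia.
Qed.

Lemma letter_count_le k j : k <= size w -> 0 < j -> letter_count w j k <= n - j.
Proof.
move=> le_kw j_gt0; rewrite letter_count_inv_code //.
by have := count_ge_inv_code (sigma n w k) j; rewrite (perm_size (perm_sigma le_kw)) size_iota.
Qed.

Lemma letter_count_up k j : k < size w -> letter w k.+1 = j.+1 -> 0 < j ->
  letter_count w j.+1 k.+1 = letter_count w j k.
Proof.
move=> lt_kw def_j j_gt0.
have [perm_s _] := inv_code_sigma_step lt_kw; rewrite def_j /= in perm_s.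
have j_once : count (pred1 j) (inv_code (sigma n w k)) = 1.
  apply/anti_leq/andP; split; first exact: count_inv_code_sigma_le1 (ltnW lt_kw) j_gt0.
  have := perm_mem perm_s j; rewrite !inE eqxx (ltn_eqF (ltnSn j)) /= => j_in.
  by rewrite -has_count has_pred1 -j_in.
rewrite !letter_count_inv_code ?(ltnW lt_kw) // (count_leq_split j) j_once addn1.
by have := permP perm_s (fun v => j.+1 <= v); rewrite /= ltnn leqnn /=; lia.
Qed.

Lemma letter_count_down k j : k < size w -> letter w k.+1 = j ->
  letter_count w j k.+1 = (letter_count w j.+1 k).+1.
Proof.
move=> lt_kw def_j; have /andP [j_gt0 _] := letter_network_range lt_kw.
rewrite def_j in j_gt0.
have [perm_s j_notin] := inv_code_sigma_step lt_kw; rewrite def_j in perm_s j_notin.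
have j_none : count (pred1 j) (inv_code (sigma n w k)) = 0 by apply/count_memPn.
have := permP perm_s (fun v => j <= v); rewrite /= leqnn leqNgt ltn_predL j_gt0 /=.
rewrite (count_leq_split j (inv_code (sigma n w k))) j_none.
by rewrite !letter_count_inv_code ?(ltnW lt_kw) //; lia.
Qed.

Lemma cellQshift_network k (j := letter w k) (i := letter_count w j k) :
  0 < k < size w ->
  [/\ cellQshift w k = (i, i + j - 1), 0 < j < n, 0 < i, i <= n - j & Qw w i j = k].
Proof.
case/andP=> k_gt0 lt_kw.
have /andP [j_gt0 j_lt_n] : 0 < j < n.
  by rewrite /j -(prednK k_gt0); apply: letter_network_range; lia.
have i_gt0 : 0 < i by rewrite /i -(prednK k_gt0) letter_countS prednK // eqxx addn1.
split=> //; [by rewrite j_gt0 | exact: letter_count_le (ltnW lt_kw) j_gt0 |].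
by apply: Qw_letter_count; rewrite k_gt0 ltnW.
Qed.

Lemma hadj_cellQshiftP k : 0 < k < size w ->
  (exists j, letter w k = j /\ letter w k.+1 = j.+1) <-> hadj n w (cellQshift w k).
Proof.
move=> k_range; have := cellQshift_network k_range; case/andP: k_range => _ lt_kw.
set j := letter w k; set i := letter_count w j k; have def_i : letter_count w j k = i by [].
clearbody i; case=> -> /andP [j_gt0 j_lt_n] i_gt0 i_le Q_ij.
rewrite /hadj /inD /Qshift (_ : (i + j - 1 - i).+1 = j); last by lia.
rewrite (_ : ((i + j - 1).+1 - i).+1 = j.+1) ?Q_ij; last by lia.
split.
- case=> j' [<- next_j]; have := letter_count_up lt_kw next_j j_gt0; rewrite def_i => up.
  have := letter_count_le lt_kw (isT : 0 < j.+1); rewrite up.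
  by have := @Qw_letter_count w k.+1; rewrite next_j up => -> //; lia.
- case/and3P => _ _ /eqP Q; exists j; split=> //.
  by rewrite -Q letter_Qw // Q.
Qed.

Lemma vadj_cellQshiftP k : 0 < k < size w ->
  (exists j, letter w k = j.+1 /\ letter w k.+1 = j) <-> vadj n w (cellQshift w k).
Proof.
move=> k_range; have := cellQshift_network k_range; case/andP: k_range => _ lt_kw.
set j := letter w k; set i := letter_count w j k; have def_i : letter_count w j k = i by [].
clearbody i; case=> -> /andP [j_gt0 j_lt_n] i_gt0 i_le Q_ij.
rewrite /vadj /inD /Qshift (_ : (i + j - 1 - i).+1 = j) ?Q_ij; last by lia.
split.
- case=> j' [def_j next_j].
  have /andP [j'_gt0 _] := letter_network_range lt_kw; rewrite next_j in j'_gt0.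
  have := letter_count_down lt_kw next_j; rewrite -def_j def_i => up.
  have := letter_count_le lt_kw j'_gt0; rewrite up.
  rewrite (_ : (i + j - 1 - i.+1).+1 = j'); last by lia.
  by have := @Qw_letter_count w k.+1; rewrite next_j up => -> //; lia.
- case/and3P => _ /and3P [_ i_lt _].
  rewrite (_ : (i + j - 1 - i.+1).+1 = j.-1); last by lia.
  move/eqP=> Q; exists j.-1; rewrite prednK //; split=> //.
  by rewrite -Q letter_Qw // Q.
Qed.

End SortingNetwork.

Theorem mainTheorem10 (n : nat) (w : seq nat) (k : nat) :
  sorting_network n w -> avoiding132_network n w ->
  1 <= k -> k <= 'C(n, 2) - 1 ->
  ((exists j, letter w k = j /\ letter w k.+1 = j.+1) <-> hadj n w (cellQshift w k)) /\
  ((exists j, letter w k = j.+1 /\ letter w k.+1 = j) <-> vadj n w (cellQshift w k)).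
Proof.
move=> w_sorting w_avoiding k_gt0 k_le.
have k_range : 0 < k < size w by case: w_sorting => -> _ _; lia.
by split; [apply: hadj_cellQshiftP | apply: vadj_cellQshiftP].
Qed.
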